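(* Let $k\in\{1,\dots,N-1\}$. For every integer $m\ge1$ with $m\le (N-k)/2$, $$Z^{2m-1}|0_k\rangle=\prod_{j=0}^{m-1}\Big(\frac{n_{k+2j+1}}{n_{k+2j}}\Big)^{1/2}\varphi_{0_{k+2m-1}},\qquad Z^{2m}|0_k\rangle=\prod_{j=0}^{m-1}\Big(\frac{n_{k+2j+1}}{n_{k+2j}}\Big)^{1/2}|0_{k+2m}\rangle.$$
   Context: Fix $N\ge2$ and integers $n_1\ge n_2\ge\dots\ge n_N\ge1$. Let $\mathcal H=\bigoplus_{k=1}^N E_k$ where $E_k$ has orthonormal basis $\{|a_k\rangle:0\le a\le n_k-1\}$. For vectors $x,y$, $|x\rangle\langle y|$ is the operator $u\mapsto\langle y,u\rangle x$. $\zeta_k=e^{2\pi i/n_k}$, $\varphi_{a_k}=n_k^{-1/2}\sum_{b=0}^{n_k-1}\zeta_k^{-ba}|b_k\rangle$. For $1\le k\le N-1$, $Z_k=n_k^{-1/2}\sum_{b=0}^{n_{k+1}-1}\sum_{a=0}^{n_k-1}\zeta_k^{ba}|b_{k+1}\rangle\langle a_k|$, and the transport operator is $Z=\sum_{k=1}^{N-1}Z_k$ (acting on $\mathcal H$, equal to $Z_k$ on $E_k$ and zero on $E_N$). *)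

From HB Require Import structures.
From mathcomp Require Import all_boot all_order all_algebra.
From mathcomp Require Import all_classical all_reals all_analysis.
From mathcomp Require Import complex.
Set Implicit Arguments. Unset Strict Implicit. Unset Printing Implicit Defensive.
Import Order.TTheory GRing.Theory Num.Theory.
Local Open Scope ring_scope.

(* A vector of H = (+)_{k=1}^N E_k is represented by its coordinates
   v k a = <a_k, v> in the orthonormal basis {|a_k>}; indices k are
   1-based as in the paper (1 <= k <= N, 0 <= a <= n_k - 1). *)
Definition vec (R : realType) := nat -> nat -> R[i].

Definition zeta (R : realType) (nk : nat) : R[i] :=
  Complex (cos (2 * pi / nk%:R)) (sin (2 * pi / nk%:R)).

Definition ket (R : realType) (k a : nat) : vec R :=
  fun k' b => if (k' == k) && (b == a) then 1 else 0.

Definition isqrtn (R : realType) (nk : nat) : R[i] :=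
  ((Num.sqrt (nk%:R : R))^-1)%:C%C.

Definition vscale (R : realType) (c : R[i]) (v : vec R) : vec R :=
  fun k' b => c * v k' b.

Definition phi (R : realType) (n : nat -> nat) (k a : nat) : vec R :=
  fun k' b' => \sum_(b < n k)
    isqrtn R (n k) * (zeta R (n k)) ^- (b * a) * ket R k b k' b'.

(* Z_k = n_k^{-1/2} sum_{b<n_{k+1}} sum_{a<n_k} zeta_k^{ba} |b_{k+1}><a_k|,
   applied to v: |x><y| u = <y,u> x, and <a_k, v> = v k a. *)
Definition Zk (R : realType) (n : nat -> nat) (k : nat) (v : vec R) : vec R :=
  fun k' b' => \sum_(b < n k.+1) \sum_(a < n k)
    isqrtn R (n k) * (zeta R (n k)) ^+ (b * a) * v k a * ket R k.+1 b k' b'.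

Definition Zop (R : realType) (N : nat) (n : nat -> nat) (v : vec R) : vec R :=
  fun k' b' => \sum_(1 <= k < N) Zk n k v k' b'.

From HB Require Import structures.
From mathcomp Require Import all_boot all_order all_algebra.
From mathcomp Require Import all_classical all_reals all_analysis.
From mathcomp Require Import complex.
From mathcomp Require Import zify ring.
Set Implicit Arguments. Unset Strict Implicit. Unset Printing Implicit Defensive.
Import Order.TTheory GRing.Theory Num.Theory.
Local Open Scope ring_scope.

(* Z_k |0_k> = n_k^{-1/2} sum_b |b_{k+1}> = sqrt (n_{k+1} / n_k) phi_{0_{k+1}}, and
   Z_{k+1} phi_{0_{k+1}} = |0_{k+2}>: the b-th coordinate of the latter is
   n_{k+1}^{-1} sum_a zeta_{k+1}^{ba}, a geometric sum over the primitive root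
   zeta_{k+1}, which vanishes unless b = 0 (here b < n_{k+2} <= n_{k+1} is where
   the monotonicity of n is used).  Iterating these two steps from |0_k> gives
   the even and odd powers of Z. *)

Section ComplexExponential.
Variable R : realType.

Definition expi (x : R) : R[i] := Complex (cos x) (sin x).

Lemma expiD x y : expi x * expi y = expi (x + y).
Proof. by rewrite /expi cosD sinD; apply/eqP; simpc; rewrite [sin x * _ + _]addrC. Qed.

Lemma expiX x b : expi x ^+ b = expi (x *+ b).
Proof.
elim: b => [|b IHb]; first by rewrite expr0 mulr0n /expi cos0 sin0.
by rewrite exprS IHb expiD mulrS.
Qed.

Lemma expi_neq1 y : 0 < y < pi *+ 2 -> expi y != 1.
Proof.
move=> /andP[y_gt0 y_lt2pi]; apply/eqP => ey1.
have sin_half_gt0 : 0 < sin (y / 2).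
  by apply: sin_gt0_pi; rewrite divr_gt0 //= ltr_pdivrMr // mulr_natr.
have /eqP : expi (y / 2) ^+ 2 = 1 by rewrite expiX mulr2n -splitr.
by rewrite sqrf_eq1 => /orP[] /eqP[_ sin0]; move: sin_half_gt0;
  rewrite sin0 ?oppr0 ltxx.
Qed.

Lemma zeta_prim_root (nk : nat) : (0 < nk)%N -> nk.-primitive_root (zeta R nk).
Proof.
move=> nk_gt0; have nk_pos : (0 : R) < nk%:R by rewrite ltr0n.
apply/andP; split=> //; apply/forallP => i; apply/eqP/unity_rootP.
have -> : zeta R nk ^+ i.+1 = expi (pi *+ 2 * (i.+1%:R / nk%:R)).
  by rewrite [zeta R nk]/(expi _) expiX -mulr_natr -mulr_natl; congr expi; ring.
case: (eqVneq i.+1 nk) => [->|ne_nk].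
  by rewrite mulfV ?gt_eqF // mulr1 /expi cos2pi sin2pi.
have pi2_gt0 : (0 : R) < pi *+ 2 by rewrite pmulrn_lgt0 //; exact: pi_gt0.
apply/eqP/expi_neq1; rewrite pmulr_rgt0 ?gtr_pMr // divr_gt0 ?ltr0n //=.
by rewrite ltr_pdivrMr // mul1r ltr_nat ltn_neqAle ne_nk ltn_ord.
Qed.

End ComplexExponential.

Lemma sum_prim_root_expM (F : idomainType) (z : F) (n b : nat) :
  n.-primitive_root z -> (b < n)%N ->
  \sum_(a < n) z ^+ (b * a) = if b == 0%N then n%:R else 0.
Proof.
move=> prim_z b_lt_n; case: eqP => [->|/eqP b_neq0].
  by under eq_bigr do rewrite mul0n expr0; rewrite sumr_const card_ord.
under eq_bigr do rewrite exprM.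
have zb_neq1 : z ^+ b != 1.
  by rewrite -(prim_order_dvd prim_z) gtnNdvd // lt0n.
have /eqP := subrX1 (z ^+ b) n.
by rewrite -exprM mulnC exprM (prim_expr_order prim_z) expr1n subrr eq_sym
  mulf_eq0 subr_eq0 (negbTE zb_neq1) => /eqP.
Qed.

Section Coordinates.
Variable R : realType.
Implicit Types (n : nat -> nat) (v : vec R).

Lemma isqrtn_ratio (a b : nat) : (0 < a)%N -> (0 < b)%N ->
  isqrtn R b = (Num.sqrt (a%:R / b%:R : R))%:C%C * isqrtn R a.
Proof.
move=> a_gt0 b_gt0; rewrite /isqrtn -rmorphM; congr (_%:C)%C.
rewrite sqrtrM ?ler0n // sqrtrV ?ler0n // mulrAC mulfV ?mul1r //.
by rewrite sqrtr_eq0 -ltNge ltr0n.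
Qed.

Lemma isqrtn_sqrK (a : nat) : (0 < a)%N -> isqrtn R a ^+ 2 * a%:R = 1.
Proof.
move=> a_gt0; rewrite /isqrtn -(rmorph_nat (real_complex R)) -rmorphXn -rmorphM.
by rewrite exprVn sqr_sqrtr ?ler0n // mulVf ?pnatr_eq0 -?lt0n.
Qed.

Lemma ketC k a k' b : ket R k a k' b = ket R k' b k a.
Proof. by rewrite /ket eq_sym [b == a]eq_sym. Qed.

Lemma sum_mul_ket (F : nat -> R[i]) k nk k' b' :
  \sum_(b < nk) F b * ket R k b k' b' = if (k' == k) && (b' < nk)%N then F b' else 0.
Proof.
rewrite /ket; case: eqP => _ /=; last by rewrite big1 // => b _; rewrite mulr0.
rewrite (eq_bigr (fun b : 'I_nk => if b == b' :> nat then F b else 0)).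
  by rewrite -big_mkcond big_ord1_eq.
by move=> b _; rewrite eq_sym; case: eqP; rewrite ?mulr1 ?mulr0.
Qed.

Lemma phiE n j a k' b' :
  phi R n j a k' b' =
  if (k' == j) && (b' < n j)%N then isqrtn R (n j) * zeta R (n j) ^- (b' * a) else 0.
Proof. exact: (sum_mul_ket (fun b => isqrtn R (n j) * zeta R (n j) ^- (b * a))). Qed.

Lemma ZkE n j v k' b' :
  Zk n j v k' b' =
  if (k' == j.+1) && (b' < n j.+1)%N then
    \sum_(a < n j) isqrtn R (n j) * zeta R (n j) ^+ (b' * a) * v j a
  else 0.
Proof.
rewrite /Zk; under eq_bigr do rewrite -big_distrl /=.
exact: (sum_mul_ket (fun b => \sum_(a < n j) isqrtn R (n j) * zeta R (n j) ^+ (b * a) * v j a)).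
Qed.

Lemma ZopE N n v k' b' :
  Zop N n v k' b' =
  if (2 <= k' <= N)%N && (b' < n k')%N then
    \sum_(a < n k'.-1) isqrtn R (n k'.-1) * zeta R (n k'.-1) ^+ (b' * a) * v k'.-1 a
  else 0.
Proof.
rewrite /Zop; under eq_bigr do rewrite ZkE.
case: k' => [|k] /=; first by rewrite big1.
under eq_bigr do rewrite eqSS.
rewrite -big_mkcond /=; under eq_bigl do rewrite andbC eq_sym.
by rewrite big_nat1_cond_eq ltnS.
Qed.

Lemma vscaleA c d v : vscale c (vscale d v) = vscale (c * d) v.
Proof. by apply: funext => k'; apply: funext => b'; rewrite /vscale mulrA. Qed.

Lemma vscale1 v : vscale 1 v = v.
Proof. by apply: funext => k'; apply: funext => b'; rewrite /vscale mul1r. Qed.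

Lemma Zop_vscale N n c v : Zop N n (vscale c v) = vscale c (Zop N n v).
Proof.
apply: funext => k'; apply: funext => b'; rewrite /vscale !ZopE.
case: ifP => _; last by rewrite mulr0.
by rewrite mulr_sumr; apply: eq_bigr => a _; ring.
Qed.

End Coordinates.

Section Transport.
Variables (R : realType) (N : nat) (n : nat -> nat).

Lemma Zop_ket0 j : (1 <= j < N)%N -> (0 < n j)%N -> (0 < n j.+1)%N ->
  Zop N n (ket R j 0) =
  vscale (Num.sqrt ((n j.+1)%:R / (n j)%:R : R))%:C%C (phi R n j.+1 0).
Proof.
move=> /andP[j_ge1 j_ltN] nj_gt0 nj1_gt0; apply: funext => k'; apply: funext => b'.
rewrite ZopE /vscale phiE; case: k' => [|k] /=; first by rewrite mulr0.
rewrite eqSS; case: (eqVneq k j) => [->|k_neq_j] /=; last first.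
  by rewrite mulr0; case: ifP => // _; apply: big1 => a _; rewrite /ket (negbTE k_neq_j) mulr0.
rewrite ltnS j_ge1 j_ltN /=; case: ifP => _; last by rewrite mulr0.
under eq_bigr do rewrite ketC.
rewrite (sum_mul_ket (fun a => isqrtn R (n j) * zeta R (n j) ^+ (b' * a))) eqxx nj_gt0.
by rewrite muln0 expr0 invr1 !mulr1; apply: isqrtn_ratio.
Qed.

Lemma Zop_phi0 j : (1 <= j < N)%N -> (0 < n j.+1)%N -> (n j.+1 <= n j)%N ->
  Zop N n (phi R n j 0) = ket R j.+1 0.
Proof.
move=> /andP[j_ge1 j_ltN] nj1_gt0 nj1_le; have nj_gt0 := leq_trans nj1_gt0 nj1_le.
apply: funext => k'; apply: funext => b'.
rewrite ZopE /ket; case: k' => [|k] //=.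
rewrite eqSS; case: (eqVneq k j) => [->|k_neq_j] /=; last first.
  by case: ifP => // _; apply: big1 => a _; rewrite phiE (negbTE k_neq_j) mulr0.
rewrite ltnS j_ge1 j_ltN /=; case: ifPn => [b'_lt|b'_ge]; last first.
  by case: eqP b'_ge => // ->; rewrite nj1_gt0.
under eq_bigr do rewrite phiE eqxx ltn_ord /= muln0 expr0 invr1 mulr1 mulrAC.
rewrite -mulr_sumr (sum_prim_root_expM (zeta_prim_root R nj_gt0)).
  by case: eqP => _; rewrite ?mulr0 // -expr2 isqrtn_sqrK.
exact: leq_trans b'_lt nj1_le.
Qed.

Hypothesis n_nonincreasing : forall i, (1 <= i)%N -> (i < N)%N -> (n i.+1 <= n i)%N.
Hypothesis n_last_gt0 : (0 < n N)%N.

Lemma n_gt0 i : (1 <= i <= N)%N -> (0 < n i)%N.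
Proof.
have n_last_le d : (d < N)%N -> (n N <= n (N - d))%N.
  elim: d => [|d IHd] d_lt; first by rewrite subn0.
  apply: leq_trans (IHd (ltnW d_lt)) _.
  have -> : (N - d = (N - d.+1).+1)%N by lia.
  by apply: n_nonincreasing; lia.
move=> i_range; have -> : i = (N - (N - i))%N by lia.
by apply: leq_trans n_last_gt0 (n_last_le _ _); lia.
Qed.

Lemma Zop2_ket0 j : (1 <= j)%N -> (j.+2 <= N)%N ->
  Zop N n (Zop N n (ket R j 0)) =
  vscale (Num.sqrt ((n j.+1)%:R / (n j)%:R : R))%:C%C (ket R j.+2 0).
Proof.
move=> j_ge1 j2_le; have nj2_le : (n j.+2 <= n j.+1)%N by apply: n_nonincreasing; lia.
by rewrite Zop_ket0 ?Zop_vscale ?Zop_phi0 ?n_gt0 //; lia.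
Qed.

Definition transport_coef (k m : nat) : R[i] :=
  (\prod_(j < m) Num.sqrt ((n (k + 2 * j + 1)%N)%:R / (n (k + 2 * j)%N)%:R : R))%:C%C.

Lemma transport_coefS k m :
  transport_coef k m.+1 =
  transport_coef k m * (Num.sqrt ((n (k + 2 * m).+1)%:R / (n (k + 2 * m))%:R : R))%:C%C.
Proof. by rewrite /transport_coef big_ord_recr rmorphM /= addn1. Qed.

Lemma iter_Zop_ket0_even k m : (1 <= k)%N -> (k + 2 * m <= N)%N ->
  iter (2 * m) (Zop N n) (ket R k 0) = vscale (transport_coef k m) (ket R (k + 2 * m) 0).
Proof.
move=> k_ge1; elim: m => [|m IHm] km_le.
  by rewrite muln0 addn0 /transport_coef big_ord0 vscale1.
rewrite mulnS iterD IHm /=; last by lia.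
rewrite !Zop_vscale Zop2_ket0 ?vscaleA -?transport_coefS; [|lia..].
by have -> : (k + (2 + 2 * m) = (k + 2 * m).+2)%N by lia.
Qed.

Lemma iter_Zop_ket0_odd k m : (1 <= k)%N -> (k + 2 * m < N)%N ->
  iter (2 * m).+1 (Zop N n) (ket R k 0) =
  vscale (transport_coef k m.+1) (phi R n (k + 2 * m).+1 0).
Proof.
move=> k_ge1 km_lt; rewrite iterS iter_Zop_ket0_even //; last by lia.
rewrite Zop_vscale Zop_ket0 ?n_gt0 ?vscaleA -?transport_coefS //; lia.
Qed.

End Transport.

Theorem corollary2p11 (R : realType) (N : nat) (n : nat -> nat)
  (hN : (2 <= N)%N)
  (hmono : forall i : nat, (1 <= i)%N -> (i < N)%N -> (n i.+1 <= n i)%N)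
  (hpos : (1 <= n N)%N)
  (k : nat) (hk1 : (1 <= k)%N) (hk2 : (k <= N - 1)%N)
  (m : nat) (hm1 : (1 <= m)%N) (hm2 : (2 * m <= N - k)%N) :
  let c : R[i] :=
    (\prod_(j < m) Num.sqrt ((n (k + 2 * j + 1)%N)%:R / (n (k + 2 * j)%N)%:R : R))%:C%C in
  iter (2 * m - 1) (Zop N n) (ket R k 0) = vscale c (phi R n (k + 2 * m - 1) 0) /\
  iter (2 * m) (Zop N n) (ket R k 0) = vscale c (ket R (k + 2 * m) 0).
Proof.
move=> c; split; last by apply: iter_Zop_ket0_even => //; lia.
case: m hm1 hm2 @c => [//|m] _ hm2 c.
have -> : (2 * m.+1 - 1 = (2 * m).+1)%N by lia.
have -> : (k + 2 * m.+1 - 1 = (k + 2 * m).+1)%N by lia.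
by apply: iter_Zop_ket0_odd => //; lia.
Qed.
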